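(* Let $J,L\subseteq S$ with $n:=\#J\ge2$, $L\setminus\{l_1\}=J\setminus\{j_1,j_2\}$ and $j_1<l_1<j_2$. Then in $A$: $$\tau^-_J-(t_{j_2}t_{l_1}+t_{l_1}t_{j_2}-2q)\tau^-_{L\setminus\{l_1\}}-\tau^-_{\{j_1,j_2\}}\tau^-_L+\sum_{i=3}^n(-1)^{i+1}\tau^-_{(J\cup L)\setminus\{j_i\}}=0.$$
   Context: $S$ is a finite set with a total order $<$, $R$ a commutative ring with $1$, $q\in R$, $A=R\langle t_s\mid s\in S\rangle$ the free associative algebra. Subsets are enumerated increasingly: $J=\{j_1<\dots<j_{\#J}\}$, $L=\{l_1<\dots\}$. $t_J=t_{j_1}\cdots t_{j_{\#J}}$; for $I=\{j_{\alpha_1}<\dots<j_{\alpha_{\#I}}\}\subseteq J$, $\ell_J(I)=\sum_\nu(\alpha_\nu-\nu)$; $\tau^-_J=\sum_{I\subseteq J,\ \#I\text{ odd}}(-1)^{\ell_J(I)}(-q)^{(\#I-1)/2}t_{J\setminus I}$. *)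

From mathcomp Require Import all_boot all_order all_algebra.
Set Implicit Arguments. Unset Strict Implicit. Unset Printing Implicit Defensive.
Import Order.TTheory GRing.Theory.
Local Open Scope ring_scope.

Section TauMinus.
Variables (d : Order.disp_t) (S : finOrderType d).

Definition senum (J : {set S}) : seq S := sort <=%O (enum J).

(* l_J(I) = sum_nu (alpha_nu - nu), with I = {j_{alpha_1} < ... } ⊆ J
   (x = j_{alpha_nu} is the nu-th element of I; 0-based positions
   give the same differences) *)
Definition ellJ (J I : {set S}) : nat :=
  \sum_(x <- senum I) (index x (senum J) - index x (senum I))%N.
End TauMinus.

Section Alg.
Variables (d : Order.disp_t) (S : finOrderType d) (R : comPzRingType)
          (B : algType R) (t : S -> B).

Definition tJ (J : {set S}) : B := \prod_(j <- senum J) t j.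

Definition tauM (q : R) (J : {set S}) : B :=
  \sum_(I in powerset J | odd #|I|)
     (((-1) ^+ ellJ J I * (- q) ^+ (#|I|.-1)./2) *: tJ (J :\: I)).
End Alg.

From mathcomp Require Import all_boot all_order all_algebra.
Import Order.TTheory GRing.Theory.
Local Open Scope ring_scope.
Set Implicit Arguments. Unset Strict Implicit. Unset Printing Implicit Defensive.

(* Let tau^+_J be the analogue of tau^-_J summed over the subsets I of even
   size. For x below every element of K,
     tau^+(x K) = t_x tau^+(K) - q tau^-(K),   tau^-(x K) = tau^+(K) - t_x tau^-(K),
   so prepending elements acts on the pair (tau^+, tau^-) by left multiplication
   with fixed 2x2 matrices. The alternating sum over the deletions of single
   elements of K sends (tau^+, tau^-)(K) to (tau^-(K), 0); hence for X below K the
   alternating sum of tau^b(X u (K \ k_i)) is tau^b(X) tau^-(K). With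
   K = J \ {j1, j2}, every term of the relation becomes a combination of
   tau^+(K) and tau^-(K), whose coefficients cancel. *)

Section OrderedSets.
Variables (d : Order.disp_t) (S : finOrderType d).
Implicit Types (I K X : {set S}) (x y : S).

Definition lt_all x K := forall y, y \in K -> (x < y)%O.

Lemma lt_all_notin x K : lt_all x K -> x \notin K.
Proof. by move=> ltxK; apply/negP => /ltxK; rewrite ltxx. Qed.

Lemma lt_all_trans x y K : (x < y)%O -> lt_all y K -> lt_all x K.
Proof. by move=> ltxy ltyK z /ltyK; apply: lt_trans. Qed.

Lemma lt_allS x I K : I \subset K -> lt_all x K -> lt_all x I.
Proof. by move=> /subsetP sIK ltxK y /sIK; apply: ltxK. Qed.

Lemma lt_all1 x y : (x < y)%O -> lt_all x [set y].
Proof. by move=> ltxy z /set1P ->. Qed.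

Lemma lt_allU x I K : lt_all x I -> lt_all x K -> lt_all x (I :|: K).
Proof. by move=> ltxI ltxK y; rewrite in_setU => /orP [/ltxI|/ltxK]. Qed.

Lemma senum_sorted K : sorted <%O (senum K).
Proof. by rewrite lt_sorted_uniq_le sort_uniq enum_uniq sort_le_sorted. Qed.

Lemma mem_senum K : senum K =i K.
Proof. by move=> y; rewrite mem_sort mem_enum. Qed.

Lemma size_senum K : size (senum K) = #|K|.
Proof. by rewrite size_sort cardE. Qed.

Lemma mem_nth_senum K x0 (i : 'I_#|K|) : nth x0 (senum K) i \in K.
Proof. by rewrite -mem_senum mem_nth ?size_senum. Qed.

Lemma senum0 : senum (set0 : {set S}) = [::].
Proof. by apply: size0nil; rewrite size_senum cards0. Qed.

Lemma senumU1 x K : lt_all x K -> senum (x |: K) = x :: senum K.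
Proof.
move=> ltxK; apply: lt_sorted_eq; first exact: senum_sorted.
  rewrite /= lt_path_sortedE senum_sorted andbT.
  by apply/allP => y; rewrite mem_senum => /ltxK.
by move=> y; rewrite mem_senum in_setU1 inE mem_senum.
Qed.

Lemma senum_consP x s K : senum K = x :: s ->
  [/\ x \in K, lt_all x (K :\ x) & senum (K :\ x) = s].
Proof.
move=> Ks; have xK : x \in K by rewrite -mem_senum Ks mem_head.
have ltxs : all (fun y => x < y)%O s.
  by have := senum_sorted K; rewrite Ks /= lt_path_sortedE => /andP [].
have ltxK : lt_all x (K :\ x).
  move=> y; rewrite in_setD1 -mem_senum Ks inE => /andP [/negbTE -> /= ys].
  exact: (allP ltxs).
split=> //; have := senumU1 ltxK; rewrite setD1K // Ks.
by case.
Qed.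

Lemma set_lt_ind (P : {set S} -> Prop) :
  P set0 -> (forall x K, lt_all x K -> P K -> P (x |: K)) -> forall K, P K.
Proof.
move=> P0 PU1 K; move: {2}#|K| (erefl #|K|) => n.
elim: n K => [|n IHn] K cardK; first by move/cards0_eq: cardK ->.
case Ks: (senum K) => [|x s]; first by move: cardK; rewrite -size_senum Ks.
have [xK ltxK _] := senum_consP Ks.
rewrite -(setD1K xK); apply: PU1 => //; apply: IHn.
by move: cardK; rewrite (cardsD1 x K) xK => -[].
Qed.

Lemma index_senum K y : y \in K ->
  index y (senum K) = #|[set z in K | (z < y)%O]|.
Proof.
rewrite -mem_senum; have := senum_sorted K.
have -> : #|[set z in K | (z < y)%O]| = count (fun z => z < y)%O (senum K).
  rewrite cardE -size_filter; apply/perm_size/uniq_perm.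
  - exact: enum_uniq.
  - by rewrite filter_uniq // sort_uniq enum_uniq.
  by move=> z; rewrite mem_enum mem_filter inE mem_senum andbC.
elim: (senum K) => // z s IHs /= zs; rewrite inE eq_sym.
case: eqVneq => [<- _|neyz /= ys]; last first.
  by rewrite IHs ?(path_sorted zs) // (allP (lt_path_min zs)).
rewrite ltxx add0n; apply/esym/eqP; rewrite -leqn0 leqNgt -has_count.
by apply/hasPn => w /(allP (lt_path_min zs)) /lt_gtF ->.
Qed.

Lemma index_senum_le I K y : I \subset K -> y \in I ->
  (index y (senum I) <= index y (senum K))%N.
Proof.
move=> sIK yI; rewrite !index_senum ?(subsetP sIK) //.
apply/subset_leq_card/subsetP => z; rewrite !inE.
by case/andP => /(subsetP sIK) -> ->.
Qed.

Lemma ellJU1 x K I : lt_all x K -> I \subset K ->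
  ellJ (x |: K) I = (ellJ K I + #|I|)%N.
Proof.
move=> ltxK sIK; rewrite /ellJ senumU1 // -size_senum -sum1_size -big_split /=.
apply: eq_big_seq => y; rewrite mem_senum => yI.
have yK := subsetP sIK y yI.
rewrite /= (lt_eqF (ltxK y yK)) addn1 subSn //.
exact: index_senum_le.
Qed.

Lemma ellJU1U1 x K I : lt_all x K -> I \subset K ->
  ellJ (x |: K) (x |: I) = ellJ K I.
Proof.
move=> ltxK sIK; rewrite /ellJ (senumU1 (lt_allS sIK ltxK)) senumU1 //.
rewrite big_cons /= eqxx subnn add0n.
apply: eq_big_seq => y; rewrite mem_senum => yI.
by rewrite /= (lt_eqF (ltxK y (subsetP sIK y yI))) subSS.
Qed.

Lemma subsetU1_notin x I K : x \notin I -> (I \subset x |: K) = (I \subset K).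
Proof.
move=> xNI; apply/idP/idP => sIK; last exact: subset_trans sIK (subsetU1 x K).
apply/subsetP => y yI; have := subsetP sIK y yI.
by rewrite in_setU1 => /predU1P [eyx|//]; rewrite -eyx yI in xNI.
Qed.

Lemma setUD1r X K y : y \notin X -> (X :|: K) :\ y = X :|: (K :\ y).
Proof. by move=> yNX; rewrite setDUl (setDidPl _) // disjoint_sym disjoints1. Qed.

Lemma big_powersetU1 (V : nmodType) (F : {set S} -> V) (P : pred {set S}) x K :
  x \notin K ->
  \sum_(I in powerset (x |: K) | P I) F I
    = \sum_(I in powerset K | P I) F I + \sum_(I in powerset K | P (x |: I)) F (x |: I).
Proof.
move=> xNK; rewrite (bigID (fun I => x \in I)) /= addrC; congr (_ + _).
  apply: eq_bigl => I; rewrite !powersetE.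
  case: (boolP (x \in I)) => [xI|xNI]; last by rewrite andbT subsetU1_notin.
  by rewrite andbF; apply/esym/andP => -[/subsetP/(_ x xI)]; rewrite (negbTE xNK).
rewrite (reindex_onto (fun I => x |: I) (fun I => I :\ x)) /=; last first.
  by move=> I /andP [_ xI]; rewrite setD1K.
apply: eq_bigl => I; rewrite setU11 andbT !powersetE.
case: (boolP (x \in I)) => [xI|xNI].
  have /negbTE -> : (x |: I) :\ x != I.
    by apply: contraTneq xI => <-; rewrite !inE eqxx.
  by rewrite (contraNF (fun sIK => subsetP sIK x xI) xNK) andbF.
by rewrite setU1K // eqxx andbT subUset sub1set setU11 /= subsetU1_notin.
Qed.

End OrderedSets.

(* Lemma 3.4 with [a, b, c] standing for [t j1, t j2, t l1], [Q] for [q%:A],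
   and [s, u] for tau^+ and tau^- of [J \ {j1, j2}]. *)
Lemma relation_identity (B : pzRingType) (a b c Q s u : B) :
  b * s - Q * u - a * (s - b * u) - (b * c + c * b - (Q + Q)) * u
  - (b - a) * (s - c * u) + (c * b - Q - a * (b - c)) * u = 0.
Proof.
rewrite !(mulrBr, mulrBl, mulrDl, mulrA) !(opprB, opprD, opprK, addrA).
rewrite (ACl ((1*12)*(2*5)*(3*16)*(4*11)*(6*14)*(7*9)*(8*13)*(10*15))) /=.
by rewrite !(subrr, addNr, addr0).
Qed.

Section Tau.
Variables (d : Order.disp_t) (S : finOrderType d) (R : comPzRingType)
          (B : algType R) (t : S -> B) (q : R).
Implicit Types (I J K X : {set S}) (x y : S).

Lemma tJU1 x K : lt_all x K -> tJ t (x |: K) = t x * tJ t K.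
Proof. by move=> ltxK; rewrite /tJ senumU1 // big_cons. Qed.

Definition tau_term J I : B :=
  ((-1) ^+ ellJ J I * (- q) ^+ (#|I|./2)) *: tJ t (J :\: I).

(* [tau true] is tau^- (for odd [#|I|], [#|I|./2] is [(#|I| - 1)/2]) and
   [tau false], the same sum over the even [I], is tau^+. *)
Definition tau (b : bool) J : B :=
  \sum_(I in powerset J | odd #|I| == b) tau_term J I.

Lemma tauM_tau J : tauM t q J = tau true J.
Proof.
apply: eq_big => [I|I /andP [_ oddI]]; first by rewrite eqb_id.
by rewrite /tau_term; case: #|I| oddI => // n /= /negbTE; rewrite uphalf_half => ->.
Qed.

Lemma tau_set0 b : tau b set0 = if b then 0 else 1.
Proof.
rewrite /tau powerset0 big_mkcondr big_set1 /tau_term setDv /tJ /ellJ.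
by rewrite senum0 !big_nil cards0 !expr0 mul1r scale1r; case: b.
Qed.

Lemma tau_termU1 x K I : lt_all x K -> I \subset K ->
  tau_term (x |: K) I = (-1) ^+ #|I| *: (t x * tau_term K I).
Proof.
move=> ltxK sIK; have xNI : x \notin I := lt_all_notin (lt_allS sIK ltxK).
rewrite /tau_term setDUl (setDidPl _) ?disjoints1 //.
rewrite (tJU1 (lt_allS (subsetDl K I) ltxK)) ellJU1 // exprD.
by rewrite -scalerAr !scalerA mulrCA mulrA.
Qed.

Lemma tau_termU1U1 x K I : lt_all x K -> I \subset K ->
  tau_term (x |: K) (x |: I) = (- q) ^+ odd #|I| *: tau_term K I.
Proof.
move=> ltxK sIK; have xNK := lt_all_notin ltxK.
have xNI : x \notin I := lt_all_notin (lt_allS sIK ltxK).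
rewrite /tau_term ellJU1U1 // cardsU1 xNI add1n /= uphalf_half exprD scalerA.
rewrite mulrCA; congr (_ *: tJ t _); apply/setP => y; rewrite !inE.
by case: eqVneq => [->|] /=; rewrite ?(negbTE xNK) ?andbF.
Qed.

Lemma tauU1 b x K : lt_all x K ->
  tau b (x |: K) = (-1) ^+ b *: (t x * tau b K) + (- q) ^+ (~~ b) *: tau (~~ b) K.
Proof.
move=> ltxK; rewrite /tau big_powersetU1 ?lt_all_notin //; congr (_ + _).
  rewrite mulr_sumr scaler_sumr; apply: eq_bigr => I /andP [sIK /eqP oddI].
  by rewrite powersetE in sIK; rewrite tau_termU1 // -signr_odd oddI.
have oddU1 I : I \subset K -> odd #|x |: I| = ~~ odd #|I|.
  by move=> sIK; rewrite cardsU1 (lt_all_notin (lt_allS sIK ltxK)).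
rewrite scaler_sumr; apply: eq_big => I.
  by rewrite powersetE; apply: andb_id2l => /oddU1 ->; case: (odd _); case: b.
case/andP; rewrite powersetE => sIK; rewrite oddU1 // => /eqP <-.
by rewrite tau_termU1U1 // negbK.
Qed.

Lemma tau_evenU1 x K : lt_all x K ->
  tau false (x |: K) = t x * tau false K - q *: tau true K.
Proof. by move=> ltxK; rewrite tauU1 // expr0 expr1 !scaleNr !scale1r. Qed.

Lemma tau_oddU1 x K : lt_all x K ->
  tau true (x |: K) = tau false K - t x * tau true K.
Proof. by move=> ltxK; rewrite tauU1 // expr0 expr1 scaleN1r scale1r addrC. Qed.

Lemma sum_tauU1 b y n (c : 'I_n -> R) (M : 'I_n -> {set S}) :
  (forall i, lt_all y (M i)) ->
  \sum_(i < n) c i *: tau b (y |: M i)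
    = (-1) ^+ b *: (t y * \sum_(i < n) c i *: tau b (M i))
      + (- q) ^+ (~~ b) *: \sum_(i < n) c i *: tau (~~ b) (M i).
Proof.
move=> ltyM; rewrite mulr_sumr !scaler_sumr -big_split /=.
apply: eq_bigr => i _; rewrite tauU1 // scalerDr !scalerA.
by rewrite [c i * _]mulrC [c i * (- q) ^+ _]mulrC -!scalerA scalerAr.
Qed.

Lemma tau_set1 b x : tau b [set x] = if b then 1 else t x.
Proof.
have lt_x0 : lt_all x set0 by move=> y; rewrite inE.
rewrite -[[set x]]setU0 tauU1 // !tau_set0.
by case: b; rewrite /= ?mulr0 ?mulr1 ?scaler0 ?expr0 ?scale1r ?addr0 ?add0r.
Qed.

Lemma alt_sum_tau b K x0 :
  \sum_(i < #|K|) (-1) ^+ i *: tau b (K :\ nth x0 (senum K) i)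
    = if b then 0 else tau true K.
Proof.
elim/set_lt_ind: K b => [|y K ltyK IHK] b.
  by rewrite cards0 big_ord0 tau_set0; case: b.
have yNK := lt_all_notin ltyK.
rewrite cardsU1 yNK big_ord_recl senumU1 //= setU1K // expr0 scale1r.
under eq_bigr => i _.
  rewrite /bump /= setUD1r ?in_set1 ?(gt_eqF (ltyK _ (mem_nth_senum x0 i))) //.
  rewrite exprS mulN1r scaleNr.
  over.
rewrite sumrN sum_tauU1 => [|i]; last by apply: lt_allS ltyK; apply: subD1set.
rewrite !IHK; case: b => /=.
  by rewrite mulr0 scaler0 add0r expr0 scale1r subrr.
by rewrite tau_oddU1 // expr0 expr1 scale1r scaleNr scaler0 oppr0 addr0.
Qed.

Lemma alt_sum_tauU b X K x0 : (forall x, x \in X -> lt_all x K) ->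
  \sum_(i < #|K|) (-1) ^+ i *: tau b (X :|: (K :\ nth x0 (senum K) i))
    = tau b X * tau true K.
Proof.
elim/set_lt_ind: X b => [|x X ltxX IHX] b ltXK.
  under eq_bigr do rewrite set0U.
  by rewrite alt_sum_tau tau_set0; case: b; rewrite ?mul0r ?mul1r.
have ltXK' y : y \in X -> lt_all y K by move=> yX; apply/ltXK/setU1r.
under eq_bigr do rewrite -setUA.
rewrite sum_tauU1 => [|i]; last first.
  by apply: lt_allU ltxX _; apply/lt_allS/ltXK/setU11; apply: subD1set.
by rewrite !IHX // tauU1 // mulrDl -!scalerAl mulrA.
Qed.

Lemma tau_relation x1 y x2 K x0 :
  (x1 < y)%O -> (y < x2)%O -> lt_all x2 K ->
  tau true (x1 |: (x2 |: K))
  - (t x2 * t y + t y * t x2 - (q *+ 2)%:A) * tau true K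
  - tau true [set x1; x2] * tau true (y |: K)
  + \sum_(i < #|K|)
      (-1) ^+ i *: tau true ([set x1; y; x2] :|: (K :\ nth x0 (senum K) i))
  = 0.
Proof.
move=> lt1y lty2 lt2K; have lt12 := lt_trans lt1y lty2.
have ltyK := lt_all_trans lty2 lt2K; have lt1K := lt_all_trans lt1y ltyK.
rewrite alt_sum_tauU; last by move=> z; rewrite !inE -orbA => /or3P [] /eqP ->.
have lt1_2K : lt_all x1 (x2 |: K) := lt_allU (lt_all1 lt12) lt1K.
have lty_2 := lt_all1 lty2; have lt1_2 := lt_all1 lt12.
have lt1_y2 : lt_all x1 [set y; x2] := lt_allU (lt_all1 lt1y) lt1_2.
rewrite -setUA tau_oddU1 ?tau_oddU1 ?tau_evenU1 ?tau_set1 ?mulr1 //.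
by rewrite -scalerMnl mulr2n -[q *: _]mulr_algl relation_identity.
Qed.

End Tau.

Theorem lemma3p4 (d : Order.disp_t) (S : finOrderType d) (R : comPzRingType)
    (q : R) (B : algType R) (t : S -> B)
    (J L : {set S}) (j1 j2 l1 : S) :
  (2 <= #|J|)%N ->
  take 2 (senum J) = [:: j1; j2] ->
  ohead (senum L) = Some l1 ->
  L :\ l1 = (J :\ j1) :\ j2 ->
  (j1 < l1)%O -> (l1 < j2)%O ->
  tauM t q J
  - (t j2 * t l1 + t l1 * t j2 - (q *+ 2)%:A) * tauM t q (L :\ l1)
  - tauM t q [set j1; j2] * tauM t q L
  + \sum_(3 <= i < #|J|.+1)
      ((-1) ^+ (i.+1) *: tauM t q ((J :|: L) :\ nth j1 (senum J) i.-1))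
  = 0.
Proof.
(* [2 <= #|J|] is implied by the hypothesis on [take 2 (senum J)]. *)
move=> _ Jj1j2 Ll1 LK lt1l lt2l.
have [s Js] : exists s, senum J = [:: j1, j2 & s].
  by exists (drop 2 (senum J)); rewrite -[LHS](cat_take_drop 2) Jj1j2.
have [j1J _ J1s] := senum_consP Js; have [j2J lt2K Ks] := senum_consP J1s.
set K := J :\ j1 :\ j2 in LK lt2K Ks.
have l1L : l1 \in L.
  by rewrite -mem_senum; case: (senum L) Ll1 => [|x s'] //= [->]; apply: mem_head.
have EJ : J = j1 |: (j2 |: K) by rewrite /K !setD1K.
have EL : L = l1 |: K by rewrite -LK setD1K.
clearbody K.
have ltXK z : z \in [set j1; l1; j2] -> lt_all z K.
  have ltlK := lt_all_trans lt2l lt2K.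
  by rewrite !inE -orbA => /or3P [] /eqP -> //; apply: lt_all_trans ltlK.
have EJL : J :|: L = [set j1; l1; j2] :|: K.
  apply/setP => z; rewrite EJ EL !inE.
  by case: (z == j1); case: (z == l1); case: (z == j2); rewrite /= ?orbT ?orbF ?orbb.
rewrite EJL -size_senum Js /= -Ks size_senum.
rewrite -[3%N]/(0 + 3)%N big_addn big_mkord !subSS subn0.
under eq_bigr => i _.
  rewrite addn3 /= !exprS !mulN1r !opprK setUD1r ?tauM_tau; last first.
    by apply/negP => /ltXK /(_ _ (mem_nth_senum j1 i)); rewrite ltxx.
  over.
rewrite LK {1}EJ EL !tauM_tau.
exact: tau_relation.
Qed.
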